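(* Assume $p=m$, $D=0$, and $\mathrm{rank}\begin{bmatrix} I-A & B\\ C & 0\end{bmatrix}=n+m$. Let $(X,U)$ be a minimizer of Problem 3. Then the equation $\begin{bmatrix} K & H \\ G & F \end{bmatrix}\begin{bmatrix} X \\ Z \end{bmatrix} = \begin{bmatrix} U \\ V \end{bmatrix}$ has a unique solution $(K,H,G,F)$. Suppose moreover that (i) $\det(I-(A+BK))\neq 0$ and (ii) $\det(I-F)\neq 0$. Then $C(I-(A+BK))^{-1}B$ is invertible and, with $$M=\big(C(I-(A+BK))^{-1}B\big)^{-1},\qquad L=-G(I-(A+BK))^{-1}BM,$$ for every initial state $x_0\in\mathbb{R}^n$ and every constant reference value $r_+\in\mathbb{R}^m$, the closed-loop system $\psi_r(t+1)=\mathcal{A}_{cl}\psi_r(t)+\mathcal{M}_r r_+$, $y(t)=\mathcal{C}\psi_r(t)$ has a unique steady state $\psi_\infty=(x_\infty,z_\infty)$ (i.e. a unique solution of $\psi_\infty=\mathcal{A}_{cl}\psi_\infty+\mathcal{M}_r r_+$), and it satisfies $y_\infty=Cx_\infty=r_+$ and $z_\infty=0$.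
   Context: Plant: $x(t+1)=Ax(t)+Bu(t)$, $x(0)=x_0$, $y(t)=Cx(t)$, with $x\in\mathbb{R}^n$, $u,y\in\mathbb{R}^m$, $(A,B)$ reachable, horizon $N\ge 2$. $P\in\mathbb{R}^{N\times N}$ is the nilpotent shift matrix $P=\begin{bmatrix}0 & 0\\ I_{N-1} & 0\end{bmatrix}$; $\otimes$ is the Kronecker product; $\mathrm{e}_1\in\mathbb{R}^N$; $\|W\|_1=\sum_{i,j}|w_{ij}|$. Problem 3 (minimum attention control): minimize $\|U(P\otimes I_n)-U\|_1$ over $X\in\mathbb{R}^{n\times nN}$, $U\in\mathbb{R}^{m\times nN}$ subject to $AX+BU=X(P\otimes I_n)$ and $X(\mathrm{e}_1\otimes I_n)=I_n$. $Z=\begin{bmatrix}0_{n(N-1)\times n} & I_{n(N-1)}\end{bmatrix}$, $V=Z(P\otimes I_n)$. Tracking compensator: $z_r(t+1)=Fz_r(t)+Gx(t)+Lr(t)$, $u(t)=Hz_r(t)+Kx(t)+Mr(t)$, $z_r(0)=0$. Closed-loop augmented system with $\psi_r=(x,z_r)$: $\mathcal{A}_{cl}=\begin{bmatrix}A+BK & BH\\ G & F\end{bmatrix}$, $\mathcal{M}_r=\begin{bmatrix}BM\\ L\end{bmatrix}$, $\mathcal{C}=[C~~0]$. *)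

From HB Require Import structures.
From mathcomp Require Import all_boot all_order all_algebra.
From mathcomp Require Import mxtens.
Set Implicit Arguments. Unset Strict Implicit. Unset Printing Implicit Defensive.
Import Order.TTheory GRing.Theory Num.Theory.
Local Open Scope ring_scope.

(* Kronecker product: tensmx from mathcomp-real-closed (mxtens.v), with the
   standard index ordering (i1, i2) |-> i1 * m2 + i2. *)

Definition shiftP (R : pzRingType) (N : nat) : 'M[R]_N :=
  \matrix_(i < N, j < N) ((val i == (val j).+1)%N)%:R.

Definition e1 (R : pzRingType) (N : nat) : 'cV[R]_N :=
  \col_(i < N) ((val i == 0)%N)%:R.

Definition PkronI (R : pzRingType) (n N : nat) : 'M[R]_(N * n) :=
  tensmx (shiftP R N) (1%:M : 'M[R]_n).

Definition e1kronI (R : pzRingType) (n N : nat) : 'M[R]_(N * n, n) :=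
  castmx (erefl (N * n)%N, mul1n n) (tensmx (e1 R N) (1%:M : 'M[R]_n)).

Definition Zmat (R : pzRingType) (n N : nat) : 'M[R]_(n * (N - 1), N * n) :=
  \matrix_(i, j) ((val j == n + val i)%N)%:R.

Definition l1norm (R : numDomainType) (p q : nat) (W : 'M[R]_(p, q)) : R :=
  \sum_(i < p) \sum_(j < q) `|W i j|.

Definition reachable (R : fieldType) (n m : nat) (A : 'M[R]_n) (B : 'M[R]_(n, m)) : bool :=
  row_full (\sum_(k < n) <<(A ^+ k *m B)^T>>)%MS.

Definition feasible3 (R : realFieldType) (n m N : nat)
  (A : 'M[R]_n) (B : 'M[R]_(n, m)) (X : 'M[R]_(n, N * n)) (U : 'M[R]_(m, N * n)) : Prop :=
  A *m X + B *m U = X *m PkronI R n N /\ X *m e1kronI R n N = 1%:M.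

Definition minimizer3 (R : realFieldType) (n m N : nat)
  (A : 'M[R]_n) (B : 'M[R]_(n, m)) (X : 'M[R]_(n, N * n)) (U : 'M[R]_(m, N * n)) : Prop :=
  feasible3 A B X U /\
  forall X' U', feasible3 A B X' U' ->
    l1norm (U *m PkronI R n N - U) <= l1norm (U' *m PkronI R n N - U').

Definition Vmat (R : pzRingType) (n N : nat) : 'M[R]_(n * (N - 1), N * n) :=
  Zmat R n N *m PkronI R n N.

Definition gain_eq (R : realFieldType) (n m N : nat)
  (X : 'M[R]_(n, N * n)) (U : 'M[R]_(m, N * n))
  (K : 'M[R]_(m, n)) (H : 'M[R]_(m, n * (N - 1)))
  (G : 'M[R]_(n * (N - 1), n)) (F : 'M[R]_(n * (N - 1))) : Prop :=
  block_mx K H G F *m col_mx X (Zmat R n N) = col_mx U (Vmat R n N).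

From HB Require Import structures.
From mathcomp Require Import all_boot all_order all_algebra.
From mathcomp Require Import mxtens.
From mathcomp Require Import zify.
Set Implicit Arguments. Unset Strict Implicit. Unset Printing Implicit Defensive.
Import Order.TTheory GRing.Theory Num.Theory.
Local Open Scope ring_scope.

(* Write T = [X; Z] and Acl = [A+BK BH; G F].  The proof rests on three facts.
   1. Feasibility gives X (e1 (x) I) = I, and Z (e1 (x) I) = 0, Z Z^T = I;
      hence T has an explicit right inverse, so the square matrix T is
      invertible and the gain equation [K H; G F] T = [U; V] has exactly one
      solution.
   2. The gain equation together with A X + B U = X (P (x) I) gives the
      intertwining Acl T = T (P (x) I).  As P is nilpotent, so is Acl, and a
      fixed-point equation psi = Acl psi + b has at most one solution.
   3. The rank condition on [I-A B; C 0] makes the DC gain C (I-(A+BK))^-1 B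
      invertible, and with M its inverse, psi = ((I-(A+BK))^-1 B M r, 0) is a
      fixed point whose output is exactly r. *)

Lemma sum_indicator (R : pzRingType) (p a : nat) (f : 'I_p -> R) (ap : (a < p)%N) :
  \sum_(j < p) ((val j == a)%N)%:R * f j = f (Ordinal ap).
Proof.
rewrite (bigD1 (Ordinal ap)) //= eqxx mul1r big1 ?addr0 // => j neq_j.
suff -> : (val j == a) = false by rewrite mul0r.
by apply/negbTE; apply: contra neq_j => /eqP eq_j; apply/eqP/val_inj.
Qed.

Lemma sum_indicator_out (R : pzRingType) (p a : nat) (f : 'I_p -> R) :
  (p <= a)%N -> \sum_(j < p) ((val j == a)%N)%:R * f j = 0.
Proof.
move=> pa; rewrite big1 // => j _.
suff -> : (val j == a) = false by rewrite mul0r.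
by apply/negbTE/eqP => eq_j; move: (ltn_ord j); rewrite eq_j; lia.
Qed.

(* Z discards the first block row, which is the only one seen by e1 (x) I. *)
Lemma Zmat_e1kronI (R : pzRingType) n N : Zmat R n N *m e1kronI R n N = 0.
Proof.
apply/matrixP => i k; rewrite !mxE; under eq_bigr do rewrite !mxE.
case: (ltnP (n + i) (N * n)) => lt_ni; last by rewrite sum_indicator_out.
rewrite (sum_indicator _ lt_ni) castmxE !mxE /=.
have n_gt0 : (0 < n)%N.
  by case: n i k {lt_ni} => [|//] [i]; rewrite /= mul0n.
have : (0 < (n + i) %/ n)%N by rewrite divn_gt0 // leq_addr.
by rewrite lt0n => /negbTE ->; rewrite mul0r.
Qed.

Lemma Zmat_rinv (R : pzRingType) n N : Zmat R n N *m (Zmat R n N)^T = 1%:M.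
Proof.
apply/matrixP => i k; rewrite !mxE; under eq_bigr do rewrite !mxE.
case: (ltnP (n + i) (N * n)) => lt_ni; first by rewrite (sum_indicator _ lt_ni) /= eqn_add2l.
exfalso; move: lt_ni; have := ltn_ord i; move: (val i) => a.
case: N {i k} => [|N]; first by rewrite /= mul0n; lia.
by rewrite subSS subn0; nia.
Qed.

Lemma shiftP_pow_support (R : pzRingType) N k (i j : 'I_N) :
  ((shiftP R N) ^+ k.+1) i j != 0 -> (j + k.+1 <= i)%N.
Proof.
elim: k i j => [|k IH] i j.
  rewrite expr1 mxE; case: (eqVneq (val i) (val j).+1) => [->|]; first by rewrite addn1.
  by rewrite eqxx.
apply: contraR => far_ij; rewrite exprS -mulmxE mxE big1 // => l _.
rewrite mxE; case: (eqVneq (val i) (val l).+1) => [il|]; last by rewrite mul0r.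
case: (eqVneq ((shiftP R N ^+ k.+1) l j) 0) => [->|/IH lj]; first by rewrite mulr0.
by case/negP: far_ij; rewrite il; move: lj; rewrite !addnS.
Qed.

Lemma shiftP_nilpotent (R : pzRingType) N : (shiftP R N) ^+ N = 0.
Proof.
case: N => [|N]; first by apply/matrixP => [[]].
apply/matrixP => i j; rewrite mxE; apply/eqP; apply: contraT => /shiftP_pow_support.
by have := ltn_ord i; lia.
Qed.

(* Hence so is P (x) I_n, since (P (x) I)^k = P^k (x) I. *)
Lemma PkronI_nilpotent (R : comPzRingType) n N : (PkronI R n N) ^+ N = 0.
Proof.
have pow_kron k : (PkronI R n N) ^+ k.+1 = shiftP R N ^+ k.+1 *t (1%:M : 'M[R]_n).
  elim: k => [|k IH]; first by rewrite !expr1.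
  rewrite exprS IH.
  change (PkronI R n N *m (shiftP R N ^+ k.+1 *t 1%:M) = shiftP R N ^+ k.+2 *t 1%:M).
  by rewrite /PkronI tensmx_mul mul1mx mulmxE -exprS.
case: N pow_kron => [_|N pow_kron]; first by apply/matrixP => [[]].
by rewrite pow_kron shiftP_nilpotent tens0mx.
Qed.

(* For feasible X, T = [X; Z] is invertible: it has the explicit right
   inverse [e1 (x) I,  Z^T - (e1 (x) I) X Z^T], and is square when N >= 1. *)
Lemma stacked_invertible (R : fieldType) n N (X : 'M[R]_(n, N * n)) :
  (1 <= N)%N -> X *m e1kronI R n N = 1%:M ->
  row_free (col_mx X (Zmat R n N)) /\ row_full (col_mx X (Zmat R n N)).
Proof.
move=> N_gt0 XE1.
set E1 := e1kronI R n N; set Zt := (Zmat R n N)^T.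
have rinv : col_mx X (Zmat R n N) *m row_mx E1 (Zt - E1 *m (X *m Zt)) = 1%:M.
  rewrite mul_col_row XE1 Zmat_e1kronI !mulmxBr Zmat_rinv !mulmxA XE1 mul1mx subrr.
  by rewrite -mulmxA Zmat_e1kronI mul0mx subr0 -scalar_mx_block.
have free : row_free (col_mx X (Zmat R n N)) by apply/row_freeP; eexists; exact: rinv.
split=> //; move: free; rewrite /row_free /row_full => /eqP ->; apply/eqP; nia.
Qed.

Lemma block_solution_unique (R : fieldType) p1 p2 q1 q2 r
    (T : 'M[R]_(q1 + q2, r)) (Y : 'M[R]_(p1 + p2, r)) :
  row_free T -> row_full T ->
  exists K H G F, block_mx K H G F *m T = Y /\
    forall K' H' G' F', block_mx K' H' G' F' *m T = Y ->
      [/\ K' = K, H' = H, G' = G & F' = F].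
Proof.
move=> free /row_fullP [T' T'T].
pose S := Y *m T'.
exists (ulsubmx S), (ursubmx S), (dlsubmx S), (drsubmx S).
split=> [|K' H' G' F' sol']; first by rewrite submxK -mulmxA T'T mulmx1.
have eqS : block_mx K' H' G' F' = S.
  by apply: (row_free_inj free); rewrite /= sol' -mulmxA T'T mulmx1.
by rewrite -eqS block_mxKul block_mxKur block_mxKdl block_mxKdr.
Qed.

(* The rank condition makes the DC gain C (I - (A+BK))^-1 B invertible:
   a left null vector w of it yields the left null vector
   [w C (I-(A+BK))^-1, -w] of the row-free matrix [I-A B; C 0]. *)
Lemma dc_gain_unit (R : fieldType) n m (A : 'M[R]_n) (B : 'M[R]_(n, m))
    (C : 'M[R]_(m, n)) (K : 'M[R]_(m, n)) :
  row_free (block_mx (1%:M - A) B C (0 : 'M[R]_m)) ->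
  (1%:M - (A + B *m K)) \in unitmx ->
  C *m invmx (1%:M - (A + B *m K)) *m B \in unitmx.
Proof.
move=> free unit_loop; rewrite -row_free_unit; apply: inj_row_free => w wS.
set y := w *m C *m invmx (1%:M - (A + B *m K)).
have yB : y *m B = 0 by rewrite /y -wS !mulmxA.
have yA : y *m (1%:M - A) = w *m C.
  by rewrite -[RHS](mulmxKV unit_loop) -/y !mulmxBr mulmxDr mulmxA yB mul0mx addr0.
have : row_mx y (- w) *m block_mx (1%:M - A) B C (0 : 'M[R]_m) = 0.
  by rewrite mul_row_block yA yB mulNmx subrr mulmx0 addr0 row_mx0.
move/eqP; rewrite (mulmx_free_eq0 _ free) -row_mx0 => /eqP /eq_row_mx [_].
by move/eqP; rewrite oppr_eq0 => /eqP.
Qed.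

(* A matrix intertwined through a right-invertible T with a nilpotent one is
   nilpotent: Acl T = T P and T W = I give Acl^k = T P^k W. *)
Lemma intertwined_nilpotent (R : pzRingType) p q k (Acl : 'M[R]_p)
    (T : 'M[R]_(p, q)) (W : 'M[R]_(q, p)) (P : 'M[R]_q) :
  T *m W = 1%:M -> Acl *m T = T *m P -> P ^+ k = 0 -> Acl ^+ k = 0.
Proof.
move=> TW AT Pk.
have pow_AT j : Acl ^+ j *m T = T *m P ^+ j.
  elim: j => [|j IH]; first by rewrite !expr0 mul1mx mulmx1.
  by rewrite !exprS -!mulmxE -mulmxA IH mulmxA AT -mulmxA.
by rewrite -[Acl ^+ k]mulmx1 -TW mulmxA pow_AT Pk mulmx0 mul0mx.
Qed.

(* For nilpotent Acl the fixed-point equation psi = Acl psi + b has at most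
   one solution: the difference of two solutions is fixed by every Acl^k. *)
Lemma nilpotent_fixpoint_unique (R : pzRingType) p q k (Acl : 'M[R]_p)
    (b psi psi' : 'M[R]_(p, q)) :
  Acl ^+ k = 0 -> psi = Acl *m psi + b -> psi' = Acl *m psi' + b -> psi' = psi.
Proof.
move=> nil fix_psi fix_psi'.
have fixed_diff : psi' - psi = Acl *m (psi' - psi).
  by rewrite mulmxBr {1}fix_psi' {1}fix_psi opprD addrACA subrr addr0.
have pow_fixed j : psi' - psi = Acl ^+ j *m (psi' - psi).
  elim: j => [|j IH]; first by rewrite expr0 mul1mx.
  by rewrite exprSr -mulmxE -mulmxA -fixed_diff.
by apply/eqP; rewrite -subr_eq0 (pow_fixed k) nil mul0mx.
Qed.

Lemma closed_loop_intertwines (R : realFieldType) n m N (A : 'M[R]_n)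
    (B : 'M[R]_(n, m)) (X : 'M[R]_(n, N * n)) (U : 'M[R]_(m, N * n))
    K H G F :
  A *m X + B *m U = X *m PkronI R n N -> gain_eq X U K H G F ->
  block_mx (A + B *m K) (B *m H) G F *m col_mx X (Zmat R n N)
    = col_mx X (Zmat R n N) *m PkronI R n N.
Proof.
rewrite /gain_eq mul_block_col => dynX /eq_col_mx [KH GF].
rewrite mul_block_col mul_col_mx GF; congr col_mx.
by rewrite mulmxDl -!mulmxA -addrA -mulmxDr KH dynX.
Qed.

Section SteadyState.

Variables (R : fieldType) (n m p : nat) (A : 'M[R]_n) (B : 'M[R]_(n, m)).
Variables (C : 'M[R]_(m, n)) (K : 'M[R]_(m, n)) (H : 'M[R]_(m, p)).
Variables (G : 'M[R]_(p, n)) (F : 'M[R]_p).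

Let Q := invmx (1%:M - (A + B *m K)).
Hypothesis unit_loop : (1%:M - (A + B *m K)) \in unitmx.
Hypothesis unit_gain : C *m Q *m B \in unitmx.
Let M := invmx (C *m Q *m B).

(* x = Q B M r solves x = (A+BK) x + B M r, and the choice of L makes z = 0
   consistent with the compensator update. *)
Lemma steady_state_fixpoint (r : 'cV[R]_m) :
  col_mx (Q *m B *m M *m r) 0
  = block_mx (A + B *m K) (B *m H) G F *m col_mx (Q *m B *m M *m r) 0
    + col_mx (B *m M) (- (G *m Q *m B *m M)) *m r.
Proof.
have loop_eq : (1%:M - (A + B *m K)) *m (Q *m B *m M *m r) = B *m M *m r.
  by rewrite !mulmxA mulmxV // mul1mx.
rewrite mul_block_col mul_col_mx add_col_mx !mulmx0 !addr0 mulNmx !mulmxA subrr.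
by congr col_mx; rewrite -loop_eq mulmxBl mul1mx !mulmxA addrC subrK.
Qed.

Lemma steady_state_output (r : 'cV[R]_m) : C *m (Q *m B *m M *m r) = r.
Proof. by rewrite !mulmxA mulmxV // mul1mx. Qed.

End SteadyState.

Theorem lemma1 (R : realFieldType) (n m N : nat)
  (A : 'M[R]_n) (B : 'M[R]_(n, m)) (C : 'M[R]_(m, n))
  (X : 'M[R]_(n, N * n)) (U : 'M[R]_(m, N * n)) :
  (2 <= N)%N ->
  reachable A B ->
  \rank (block_mx (1%:M - A) B C (0 : 'M[R]_m)) = (n + m)%N ->
  minimizer3 A B X U ->
  (exists K H G F,
     gain_eq X U K H G F /\
     forall K' H' G' F', gain_eq X U K' H' G' F' ->
       [/\ K' = K, H' = H, G' = G & F' = F])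
  /\
  (forall K H G F, gain_eq X U K H G F ->
     \det (1%:M - (A + B *m K)) != 0 ->
     \det (1%:M - F) != 0 ->
     let S := C *m invmx (1%:M - (A + B *m K)) *m B in
     S \in unitmx /\
     let M := invmx S in
     let L := - (G *m invmx (1%:M - (A + B *m K)) *m B *m M) in
     let Acl := block_mx (A + B *m K) (B *m H) G F in
     let Mr := col_mx (B *m M) L in
     let Ccl := row_mx C (0 : 'M[R]_(m, n * (N - 1))) in
     forall (x0 : 'cV[R]_n) (rp : 'cV[R]_m),
       exists psi : 'cV[R]_(n + n * (N - 1)),
         psi = Acl *m psi + Mr *m rp /\
         (forall psi', psi' = Acl *m psi' + Mr *m rp -> psi' = psi) /\
         Ccl *m psi = rp /\ C *m usubmx psi = rp /\ dsubmx psi = 0).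
Proof.
move=> N_ge2 _ rank_cond [[dynX XE1] _].
have N_gt0 : (1 <= N)%N by apply: leq_trans N_ge2.
have [T_free T_full] := stacked_invertible N_gt0 XE1.
split=> [|K H G F gain unit_loop _ S]; first exact: block_solution_unique.
rewrite -unitfE -unitmxE in unit_loop.
have unit_S : S \in unitmx.
  by apply: dc_gain_unit => //; rewrite /row_free rank_cond.
split=> // M L Acl Mr Ccl _ rp.
have /row_freeP [W TW] := T_free.
have nil_Acl : Acl ^+ N = 0.
  apply: intertwined_nilpotent TW (closed_loop_intertwines dynX gain) _.
  exact: PkronI_nilpotent.
set x := invmx (1%:M - (A + B *m K)) *m B *m M *m rp.
have fixpoint : col_mx x 0 = Acl *m col_mx x 0 + Mr *m rp.
  exact: steady_state_fixpoint.
have output : C *m x = rp by apply: steady_state_output.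
exists (col_mx x 0); split=> //; split.
  by move=> psi'; apply: nilpotent_fixpoint_unique nil_Acl fixpoint.
by rewrite col_mxKu col_mxKd /Ccl mul_row_col mul0mx addr0 output.
Qed.
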